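(* In the Cucker–Smale setting below, assume $\sum_{p=0}^{\infty}\ln\left(\frac{e^{\tilde K(t_{2p+2}-t_{2p+1})}}{2-e^{\tilde K(t_{2p+2}-t_{2p+1})}}\right)<+\infty$. Then for all $t\ge0$, $$d_V(t)\le\bar M^0:=e^{\sum_{p=0}^{\infty}\ln\left(\frac{e^{\tilde K(t_{2p+2}-t_{2p+1})}}{2-e^{\tilde K(t_{2p+2}-t_{2p+1})}}\right)}d_V(0).$$
   Context: Setting: $N\ge2$; $\tilde\psi:\mathbb{R}\to\mathbb{R}$ positive, bounded, continuous, with $\tilde K:=\|\tilde\psi\|_\infty$ and $\int_0^\infty\min_{r\in[0,x]}\tilde\psi(r)dx=+\infty$; $\{t_n\}_{n\in\mathbb{N}_0}$ increasing, nonnegative, $t_0=0$, $t_n\to\infty$, with $t_{2n+2}-t_{2n+1}<\frac{\ln2}{\tilde K}$ and $t_{2n+1}-t_{2n}>\frac1{\tilde K}$ for all $n$; $\alpha(0)=1$, $\alpha=1$ on $(t_{2n},t_{2n+1})$, $\alpha=-1$ on $[t_{2n+1},t_{2n+2}]$. $\{(x_i,v_i)\}$ solves $x_i'=v_i$, $v_i'(t)=\frac1{N-1}\sum_{j\ne i}\alpha(t)\tilde\psi(|x_i(t)-x_j(t)|)(v_j(t)-v_i(t))$, $t>0$, $x_i(0)=x_i^0$, $v_i(0)=v_i^0\in\mathbb{R}^d$ (continuous, $C^1$ on each $(t_n,t_{n+1})$). $d_V(t):=\max_{i,j}|v_i(t)-v_j(t)|$. *)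

From Stdlib Require Import Reals.
From Coquelicot Require Import Coquelicot.
Open Scope R_scope.

Fixpoint fsum (n : nat) (f : nat -> R) : R :=
  match n with O => 0 | S m => fsum m f + f m end.

(* finite max of f 0, ..., f (n-1) (0 if n = 0; used only on nonneg values) *)
Fixpoint fmax (n : nat) (f : nat -> R) : R :=
  match n with O => 0 | S m => Rmax (fmax m f) (f m) end.

(* Euclidean norm of a vector of R^d, represented as nat -> R
   (coordinates 0..d-1) *)
Definition enorm (d : nat) (w : nat -> R) : R :=
  sqrt (fsum d (fun k => (w k) ^ 2)).

Definition vsub (a b : nat -> R) : nat -> R := fun k => a k - b k.

Definition sup_norm (psi : R -> R) : R :=
  real (Lub_Rbar (fun y => exists r, y = Rabs (psi r))).

Definition min_on (psi : R -> R) (x : R) : R :=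
  real (Glb_Rbar (fun y => exists r, 0 <= r <= x /\ y = psi r)).

Definition dV (N d : nat) (v : nat -> R -> nat -> R) (t : R) : R :=
  fmax N (fun i => fmax N (fun j => enorm d (vsub (v i t) (v j t)))).

Definition log_term (K : R) (tn : nat -> R) (p : nat) : R :=
  ln (exp (K * (tn (2*p+2)%nat - tn (2*p+1)%nat))
      / (2 - exp (K * (tn (2*p+2)%nat - tn (2*p+1)%nat)))).

From Stdlib Require Import Reals Lra Lia Classical.
From Coquelicot Require Import Coquelicot.
Open Scope R_scope.

(* Let Q(t) = max_{i,j} |v_i - v_j|^2.  At a pair (i,j) realising the maximum, polarization
   puts every (v_i - v_j).(v_l - v_i) in [-Q, 0], so the Cucker-Smale field does not increase
   |v_i - v_j|^2 when alpha = 1 and increases it at rate at most 4 K Q when alpha = -1.  A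
   right-Dini-derivative argument for the maximum of finitely many functions, applied to
   e^{-ct} Q(t), turns this into: Q is nonincreasing on [t_{2p}, t_{2p+1}] and grows at most
   by e^{4 K tau_p} on [t_{2p+1}, t_{2p+2}], tau_p = t_{2p+2} - t_{2p+1}.  Hence
   Q(t) <= exp (4 K sum_p tau_p) Q(0), and since e^{2x} <= e^x / (2 - e^x) for e^x < 2 the
   exponent is at most twice the series of logarithms; take square roots. *)

Lemma fsum_ext n f g : (forall k, (k < n)%nat -> f k = g k) -> fsum n f = fsum n g.
Proof.
  induction n as [|n IH]; intros H; simpl; [reflexivity|].
  rewrite (H n), IH by (intros; try apply H; lia). reflexivity.
Qed.

Lemma fsum_le n f g : (forall k, (k < n)%nat -> f k <= g k) -> fsum n f <= fsum n g.
Proof.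
  induction n as [|n IH]; intros H; simpl; [lra|].
  assert (f n <= g n) by (apply H; lia).
  assert (fsum n f <= fsum n g) by (apply IH; intros; apply H; lia).
  lra.
Qed.

Lemma fsum_const n c : fsum n (fun _ => c) = INR n * c.
Proof. induction n as [|n IH]; cbn [fsum]; [simpl; ring|]. rewrite IH, S_INR. ring. Qed.

Lemma fsum_plus n f g : fsum n (fun k => f k + g k) = fsum n f + fsum n g.
Proof. induction n as [|n IH]; simpl; [ring|]. rewrite IH. ring. Qed.

Lemma fsum_scal n c f : fsum n (fun k => c * f k) = c * fsum n f.
Proof. induction n as [|n IH]; simpl; [ring|]. rewrite IH. ring. Qed.

Lemma fsum_swap n m (f : nat -> nat -> R) :
  fsum n (fun k => fsum m (fun l => f k l)) = fsum m (fun l => fsum n (fun k => f k l)).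
Proof.
  induction n as [|n IH]; simpl.
  - rewrite fsum_const. ring.
  - rewrite IH, <- fsum_plus. reflexivity.
Qed.

Lemma fsum_skip_le n i f B :
  (i < n)%nat -> (forall l, (l < n)%nat -> l <> i -> f l <= B) ->
  fsum n (fun l => if Nat.eqb l i then 0 else f l) <= (INR n - 1) * B.
Proof.
  induction n as [|n IH]; intros Hi Hf; [lia|].
  cbn [fsum]. rewrite S_INR.
  destruct (Nat.eqb_spec n i) as [->|Hni].
  - assert (Hsum : fsum i (fun l => if Nat.eqb l i then 0 else f l) <= fsum i (fun _ => B)).
    { apply fsum_le. intros l Hl. destruct (Nat.eqb_spec l i); [lia|]. apply Hf; lia. }
    rewrite fsum_const in Hsum. lra.
  - assert (f n <= B) by (apply Hf; lia).
    assert (fsum n (fun l => if Nat.eqb l i then 0 else f l) <= (INR n - 1) * B)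
      by (apply IH; [lia | intros; apply Hf; lia]).
    lra.
Qed.

Lemma fsum_le_Series f m : (forall n, 0 <= f n) -> ex_series f -> fsum m f <= Series f.
Proof.
  intros Hf Hs.
  assert (Hpartial : forall k, fsum (S k) f = sum_n f k).
  { induction k as [|k IH]; [rewrite sum_O; simpl; ring|].
    rewrite sum_Sn, <- IH. reflexivity. }
  apply Rle_trans with (fsum (S m) f); [simpl; specialize (Hf m); lra|].
  rewrite Hpartial. apply is_lim_seq_incr_compare; [exact (Series_correct f Hs)|].
  intros n. rewrite sum_Sn. specialize (Hf (S n)). unfold plus; simpl. lra.
Qed.

Lemma fmax_ge0 n f : 0 <= fmax n f.
Proof. induction n as [|n IH]; simpl; [lra|]. apply Rle_trans with (1 := IH), Rmax_l. Qed.

Lemma fmax_ub n f i : (i < n)%nat -> f i <= fmax n f.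
Proof.
  induction n as [|n IH]; simpl; intros Hi; [lia|].
  destruct (Nat.eq_dec i n) as [->|Hne]; [apply Rmax_r|].
  apply Rle_trans with (fmax n f); [apply IH; lia | apply Rmax_l].
Qed.

Lemma fmax_ext n f g : (forall k, (k < n)%nat -> f k = g k) -> fmax n f = fmax n g.
Proof.
  induction n as [|n IH]; intros H; simpl; [reflexivity|].
  rewrite (H n), IH by (intros; try apply H; lia). reflexivity.
Qed.

Lemma fmax_scal n c f : 0 <= c -> fmax n (fun i => c * f i) = c * fmax n f.
Proof.
  intros Hc. induction n as [|n IH]; simpl; [ring|].
  rewrite IH, RmaxRmult by exact Hc. reflexivity.
Qed.

Lemma Rmax_sqrt x y : Rmax (sqrt x) (sqrt y) = sqrt (Rmax x y).
Proof.
  destruct (Rle_or_lt x y) as [H|H%Rlt_le].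
  - rewrite (Rmax_right x y H), Rmax_right; [reflexivity | now apply sqrt_le_1_alt].
  - rewrite (Rmax_left x y H), Rmax_left; [reflexivity | now apply sqrt_le_1_alt].
Qed.

Lemma fmax_sqrt n f : fmax n (fun i => sqrt (f i)) = sqrt (fmax n f).
Proof. induction n as [|n IH]; simpl; [now rewrite sqrt_0|]. now rewrite IH, Rmax_sqrt. Qed.

Definition fmax2 (n : nat) (f : nat -> nat -> R) : R := fmax n (fun i => fmax n (f i)).

Lemma fmax2_ub n f i j : (i < n)%nat -> (j < n)%nat -> f i j <= fmax2 n f.
Proof.
  intros Hi Hj. apply Rle_trans with (fmax n (f i)); [now apply fmax_ub|].
  exact (fmax_ub n (fun i => fmax n (f i)) i Hi).
Qed.

Definition sqdist (d : nat) (a b : nat -> R) : R := fsum d (fun k => (a k - b k) ^ 2).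

Definition dot (d : nat) (a b : nat -> R) : R := fsum d (fun k => a k * b k).

Lemma sqdist_nonneg d a b : 0 <= sqdist d a b.
Proof.
  unfold sqdist. rewrite <- (Rmult_0_r (INR d)), <- fsum_const.
  apply fsum_le. intros. apply pow2_ge_0.
Qed.

Lemma sqdist_sym d a b : sqdist d a b = sqdist d b a.
Proof. apply fsum_ext. intros. ring. Qed.

Lemma polarization d a b c :
  2 * dot d (vsub a b) (vsub c a) = sqdist d c b - sqdist d c a - sqdist d a b.
Proof.
  unfold dot, sqdist, vsub. induction d as [|d IH]; cbn [fsum]; [ring|].
  rewrite Rmult_plus_distr_l, IH. ring.
Qed.

Lemma exp_le_compat x y : x <= y -> exp x <= exp y.
Proof. intros [H | ->]; [left; now apply exp_increasing | right; reflexivity]. Qed.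

Lemma sqrt_le_exp_mul x y z : 0 <= z -> y <= exp (2 * x) * z -> sqrt y <= exp x * sqrt z.
Proof.
  intros Hz Hy. rewrite <- (sqrt_square (exp x)) by (left; apply exp_pos).
  rewrite <- sqrt_mult_alt by (apply Rmult_le_pos; left; apply exp_pos).
  apply sqrt_le_1_alt. rewrite <- exp_plus. now replace (x + x) with (2 * x) by ring.
Qed.

(* e^{2x} (2 - e^x) <= e^x  is  e^x (e^x - 1)^2 >= 0. *)
Lemma double_le_ln_exp_div x : x < ln 2 -> 2 * x <= ln (exp x / (2 - exp x)).
Proof.
  intros Hx. set (e := exp x).
  assert (He : e < 2) by (unfold e; rewrite <- (exp_ln 2) by lra; now apply exp_increasing).
  assert (He0 : 0 < e) by apply exp_pos.
  rewrite <- (ln_exp (2 * x)). apply ln_le; [apply exp_pos|].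
  replace (2 * x) with (x + x) by ring. rewrite exp_plus. fold e.
  apply Rmult_le_reg_r with (2 - e); [lra|].
  replace (e / (2 - e) * (2 - e)) with e by (field; lra).
  assert (0 <= e * (e - 1) ^ 2) by (apply Rmult_le_pos; [lra | apply pow2_ge_0]).
  nra.
Qed.

(** * Right Dini derivatives of finite maxima *)

Section FilterlimArith.
Context {T : Type} {F : (T -> Prop) -> Prop} {FF : Filter F}.

Lemma filterlim_fun_plus (f g : T -> R) lf lg :
  filterlim f F (locally lf) -> filterlim g F (locally lg) ->
  filterlim (fun u => f u + g u) F (locally (lf + lg)).
Proof. intros Hf Hg. exact (filterlim_comp_2 f g Rplus Hf Hg (filterlim_plus lf lg)). Qed.

Lemma filterlim_fun_mult (f g : T -> R) lf lg :
  filterlim f F (locally lf) -> filterlim g F (locally lg) ->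
  filterlim (fun u => f u * g u) F (locally (lf * lg)).
Proof. intros Hf Hg. exact (filterlim_comp_2 f g Rmult Hf Hg (filterlim_mult lf lg)). Qed.

Lemma filterlim_fun_minus (f g : T -> R) lf lg :
  filterlim f F (locally lf) -> filterlim g F (locally lg) ->
  filterlim (fun u => f u - g u) F (locally (lf - lg)).
Proof.
  intros Hf Hg. replace (lf - lg) with (lf + -1 * lg) by ring.
  apply (filterlim_ext (fun u => f u + -1 * g u)); [intros; ring|].
  apply filterlim_fun_plus; [exact Hf|].
  apply filterlim_fun_mult; [apply filterlim_const | exact Hg].
Qed.

Lemma filterlim_Rmax x y :
  filterlim (fun z : R * R => Rmax (fst z) (snd z))
    (filter_prod (locally x) (locally y)) (locally (Rmax x y)).
Proof.
  apply filterlim_locally. intros eps.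
  apply (Filter_prod _ _ _ (ball x eps) (ball y eps)); try apply locally_ball.
  intros u w Hu Hw. change (Rabs (u - x) < eps) in Hu. change (Rabs (w - y) < eps) in Hw.
  change (Rabs (Rmax u w - Rmax x y) < eps).
  apply Rabs_def2 in Hu, Hw. apply Rabs_def1; unfold Rmax;
    destruct (Rle_dec u w), (Rle_dec x y); lra.
Qed.

Lemma filterlim_fsum n (f : nat -> T -> R) l :
  (forall k, (k < n)%nat -> filterlim (f k) F (locally (l k))) ->
  filterlim (fun u => fsum n (fun k => f k u)) F (locally (fsum n l)).
Proof.
  induction n as [|n IH]; intros H; simpl; [apply filterlim_const|].
  apply filterlim_fun_plus; [apply IH; intros; apply H; lia | apply H; lia].
Qed.

Lemma filterlim_fmax n (f : nat -> T -> R) l :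
  (forall k, (k < n)%nat -> filterlim (f k) F (locally (l k))) ->
  filterlim (fun u => fmax n (fun k => f k u)) F (locally (fmax n l)).
Proof.
  induction n as [|n IH]; intros H; simpl; [apply filterlim_const|].
  refine (filterlim_comp_2 _ _ Rmax _ _ (filterlim_Rmax (fmax n l) (l n)));
    [apply IH; intros; apply H; lia | apply H; lia].
Qed.

Lemma filterlim_sqdist d (f g : T -> nat -> R) lf lg :
  (forall k, (k < d)%nat -> filterlim (fun u => f u k) F (locally (lf k))) ->
  (forall k, (k < d)%nat -> filterlim (fun u => g u k) F (locally (lg k))) ->
  filterlim (fun u => sqdist d (f u) (g u)) F (locally (sqdist d lf lg)).
Proof.
  intros Hf Hg. apply (filterlim_fsum d (fun k u => (f u k - g u k) ^ 2)). intros k Hk.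
  apply (filterlim_comp _ _ _ (fun u => f u k - g u k) (fun z => z ^ 2) _ (locally (lf k - lg k))).
  - apply filterlim_fun_minus; [now apply Hf | now apply Hg].
  - apply (ex_derive_continuous (fun z => z ^ 2)). auto_derive. exact I.
Qed.

Lemma filter_fmax_le n (f : nat -> T -> R) (C : T -> R) :
  (forall i, (i < n)%nat -> F (fun u => f i u <= C u)) -> F (fun u => 0 <= C u) ->
  F (fun u => fmax n (fun i => f i u) <= C u).
Proof.
  induction n as [|n IH]; intros Hf HC; simpl; [exact HC|].
  apply (filter_imp (fun u => fmax n (fun i => f i u) <= C u /\ f n u <= C u)).
  - intros u [H1 H2]. now apply Rmax_lub.
  - apply filter_and; [apply IH; [intros; apply Hf; lia | exact HC] | apply Hf; lia].
Qed.

End FilterlimArith.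

Lemma filter_le_within_subset {T : Type} (F : (T -> Prop) -> Prop) {FF : Filter F}
  (D1 D2 : T -> Prop) :
  (forall x, D1 x -> D2 x) -> filter_le (within D1 F) (within D2 F).
Proof. intros H P. unfold within. apply filter_imp. intros x HP HD1. now apply HP, H. Qed.

Lemma filter_le_at_right_within a b s :
  a <= s < b -> filter_le (at_right s) (within (fun u => a <= u <= b) (locally s)).
Proof.
  intros Hs P [eps HP].
  assert (Hpos : 0 < Rmin eps (b - s)) by (apply Rmin_pos; [apply cond_pos | lra]).
  exists (mkposreal _ Hpos). intros u Hu Hsu. apply HP.
  - apply (ball_le s (Rmin eps (b - s))); [apply Rmin_l | exact Hu].
  - change (Rabs (u - s) < Rmin eps (b - s)) in Hu. apply Rabs_def2 in Hu.
    pose proof (Rmin_r eps (b - s)). lra.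
Qed.

Lemma is_derive_fsum n (f : nat -> R -> R) (df : nat -> R) s :
  (forall k, (k < n)%nat -> is_derive (f k) s (df k)) ->
  is_derive (fun t => fsum n (fun k => f k t)) s (fsum n df).
Proof.
  induction n as [|n IH]; intros H; simpl.
  - apply (is_derive_const (K := R_AbsRing) (V := R_NormedModule) 0 s).
  - apply (is_derive_plus (K := R_AbsRing) (V := R_NormedModule));
      [apply IH; intros; apply H; lia | apply H; lia].
Qed.

Lemma is_derive_sqdist d (f g : R -> nat -> R) (df dg : nat -> R) s :
  (forall k, (k < d)%nat -> is_derive (fun r => f r k) s (df k)) ->
  (forall k, (k < d)%nat -> is_derive (fun r => g r k) s (dg k)) ->
  is_derive (fun r => sqdist d (f r) (g r)) s
    (fsum d (fun k => 2 * (f s k - g s k) * (df k - dg k))).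
Proof.
  intros Hf Hg. apply (is_derive_fsum d (fun k r => (f r k - g r k) ^ 2)). intros k Hk.
  pose proof (is_derive_pow _ 2 s _
    (is_derive_minus (K := R_AbsRing) (V := R_NormedModule) _ _ s _ _ (Hf k Hk) (Hg k Hk))) as H.
  replace (2 * (f s k - g s k) * (df k - dg k))
    with (INR 2 * (df k + - dg k) * ((f s k + - g s k) ^ Init.Nat.pred 2)) by (simpl; ring).
  exact H.
Qed.

Lemma is_derive_exp_weight c (q : R -> R) s dq :
  is_derive q s dq ->
  is_derive (fun u => exp (- c * u) * q u) s (exp (- c * s) * (dq - c * q s)).
Proof.
  intros Hq.
  assert (He : is_derive (fun u => exp (- c * u)) s (- c * exp (- c * s)))
    by (auto_derive; [exact I | ring]).
  pose proof (is_derive_mult _ _ s _ _ He Hq Rmult_comm) as H.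
  replace (exp (- c * s) * (dq - c * q s))
    with (plus (mult (- c * exp (- c * s)) (q s)) (mult (exp (- c * s)) dq))
    by (unfold plus, mult; simpl; ring).
  exact H.
Qed.

Definition right_dini_nonpos (G : R -> R) (s : R) : Prop :=
  forall eta, 0 < eta -> at_right s (fun u => G u <= G s + eta * (u - s)).

Lemma right_dini_nonpos_of_is_derive G s l :
  is_derive G s l -> l <= 0 -> right_dini_nonpos G s.
Proof.
  intros HG Hl eta Heta. apply is_derive_Reals in HG.
  destruct (HG eta Heta) as [delta Hdelta].
  exists delta. intros u Hu Hsu. change R in u. change (Rabs (u - s) < delta) in Hu.
  specialize (Hdelta (u - s) ltac:(lra) Hu).
  replace (s + (u - s)) with u in Hdelta by ring.
  apply Rabs_def2 in Hdelta. destruct Hdelta as [Hup _].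
  assert (Hq : (G u - G s) / (u - s) < eta) by lra.
  apply Rmult_lt_compat_r with (r := u - s) in Hq; [|lra].
  replace ((G u - G s) / (u - s) * (u - s)) with (G u - G s) in Hq by (field; lra).
  lra.
Qed.

Lemma right_dini_nonpos_fmax n (f : nat -> R -> R) s :
  (forall i, (i < n)%nat -> filterlim (f i) (at_right s) (locally (f i s))) ->
  (forall i, (i < n)%nat -> f i s = fmax n (fun i => f i s) -> right_dini_nonpos (f i) s) ->
  right_dini_nonpos (fun u => fmax n (fun i => f i u)) s.
Proof.
  intros Hc Hd eta Heta. set (M := fmax n (fun i => f i s)).
  assert (Hright : at_right s (fun u => s < u)) by (exists (mkposreal 1 Rlt_0_1); auto).
  apply filter_fmax_le.
  - intros i Hi.
    destruct (Rle_lt_or_eq_dec _ _ (fmax_ub n (fun i => f i s) i Hi)) as [Hlt|Heq].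
    + assert (Hgap : 0 < M - f i s) by (unfold M; lra).
      apply (filter_imp (fun u => ball (f i s) (mkposreal _ Hgap) (f i u) /\ s < u)).
      * intros u [Hb Hsu]. change (Rabs (f i u - f i s) < M - f i s) in Hb.
        apply Rabs_def2 in Hb. nra.
      * apply filter_and; [apply (proj1 (filterlim_locally _ _) (Hc i Hi)) | exact Hright].
    + pose proof (Hd i Hi Heq eta Heta) as Hdi. fold M in Heq. rewrite Heq in Hdi. exact Hdi.
  - apply (filter_imp (fun u => s < u)); [|exact Hright].
    intros u Hu. pose proof (fmax_ge0 n (fun i => f i s)). fold M in H. nra.
Qed.

Lemma right_dini_nonpos_fmax2 n (g : nat -> nat -> R -> R) s :
  (forall i j, (i < n)%nat -> (j < n)%nat -> filterlim (g i j) (at_right s) (locally (g i j s))) ->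
  (forall i j, (i < n)%nat -> (j < n)%nat ->
     g i j s = fmax2 n (fun i j => g i j s) -> right_dini_nonpos (g i j) s) ->
  right_dini_nonpos (fun u => fmax2 n (fun i j => g i j u)) s.
Proof.
  intros Hc Hd. unfold fmax2 in *.
  apply (right_dini_nonpos_fmax n (fun i u => fmax n (fun j => g i j u))).
  - intros i Hi. apply filterlim_fmax. intros j Hj. now apply Hc.
  - intros i Hi Hmax. apply right_dini_nonpos_fmax; [intros j Hj; now apply Hc|].
    intros j Hj Hij. apply Hd; [exact Hi | exact Hj | congruence].
Qed.

Lemma real_induction (a b : R) (P : R -> Prop) :
  a <= b -> P a ->
  (forall s, a < s <= b -> (forall u, a <= u < s -> P u) -> P s) ->
  (forall s, a <= s < b -> (forall u, a <= u <= s -> P u) -> at_right s (fun u => u <= b -> P u)) ->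
  forall t, a <= t <= b -> P t.
Proof.
  intros Hab Ha Hleft Hright.
  set (E := fun t => a <= t <= b /\ forall u, a <= u <= t -> P u).
  assert (Ea : E a) by (split; [lra | intros u Hu; now replace u with a by lra]).
  destruct (completeness E) as [m [Hub Hlub]].
  { exists b. intros t [Ht _]. lra. }
  { exists a. exact Ea. }
  assert (Ham : a <= m) by (apply Hub, Ea).
  assert (Hmb : m <= b) by (apply Hlub; intros t [Ht _]; lra).
  assert (Hbelow : forall u, a <= u < m -> P u).
  { intros u Hu. apply NNPP. intros HPu.
    assert (m <= u); [|lra].
    apply Hlub. intros t [Ht HPt]. apply Rnot_lt_le. intros Hut. apply HPu, HPt. lra. }
  assert (Em : E m).
  { split; [lra|]. intros u Hu.
    destruct (Rle_lt_or_eq_dec _ _ (proj2 Hu)) as [Hum | ->]; [apply Hbelow; split; lra|].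
    destruct (Req_dec m a) as [-> | Hma]; [exact Ha | apply Hleft; [lra | exact Hbelow]]. }
  assert (Hm : m = b).
  { destruct (Rle_lt_or_eq_dec _ _ Hmb) as [Hlt|]; [exfalso|assumption].
    destruct (Hright m (conj Ham Hlt) (proj2 Em)) as [delta Hdelta].
    set (t := Rmin b (m + delta / 2)).
    assert (Ht : m < t <= m + delta / 2).
    { unfold t, Rmin. destruct (Rle_dec b (m + delta / 2)); pose proof (cond_pos delta); lra. }
    assert (Et : E t).
    { split; [split; [lra | apply Rmin_l]|].
      intros u Hu. destruct (Rle_or_lt u m) as [Hum|Hmu]; [apply (proj2 Em); split; lra|].
      apply Hdelta; [change (Rabs (u - m) < delta); apply Rabs_def1; lra | exact Hmu |].
      unfold t in Hu. pose proof (Rmin_l b (m + delta / 2)). lra. }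
    apply Hub in Et. lra. }
  intros t Ht. apply (proj2 Em). split; lra.
Qed.

Lemma right_dini_nonpos_nonincreasing a b (G : R -> R) :
  a <= b ->
  (forall s, a <= s <= b ->
     filterlim G (within (fun u => a <= u <= b) (locally s)) (locally (G s))) ->
  (forall s, a < s < b -> right_dini_nonpos G s) ->
  forall t, a <= t <= b -> G t <= G a.
Proof.
  intros Hab HG HD.
  (* The slack e at u = a lets the first step use continuity alone: the Dini bound is only
     available inside (a, b). *)
  assert (Hlin : forall e, 0 < e -> forall t, a <= t <= b -> G t <= G a + e * (1 + t - a)).
  { intros e He. apply real_induction; [exact Hab | nra | |].
    - intros s Hs Hbelow. apply Rnot_lt_le. intros Hgap.
      set (gap := mkposreal _ (proj2 (Rlt_0_minus _ _) Hgap)).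
      pose proof (HG s ltac:(lra)) as Hc. rewrite filterlim_locally in Hc.
      destruct (Hc gap) as [delta Hdelta].
      set (u := Rmax a (s - delta / 2)).
      assert (Hu : a <= u < s /\ Rabs (u - s) < delta).
      { unfold u, Rmax. pose proof (cond_pos delta).
        destruct (Rle_dec a (s - delta / 2)); split; try apply Rabs_def1; lra. }
      destruct Hu as [Hu Hus].
      specialize (Hdelta u Hus ltac:(lra)). change (Rabs (G u - G s) < gap) in Hdelta.
      apply Rabs_def2 in Hdelta. specialize (Hbelow u Hu). simpl in Hdelta. nra.
    - intros s Hs Hupto. destruct (Req_dec s a) as [->|Hsa].
      + pose proof (HG a ltac:(lra)) as Hc. rewrite filterlim_locally in Hc.
        destruct (Hc (mkposreal e He)) as [delta Hdelta].
        exists delta. intros u Hu Hau Hub.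
        specialize (Hdelta u Hu ltac:(lra)). change (Rabs (G u - G a) < e) in Hdelta.
        apply Rabs_def2 in Hdelta. nra.
      + apply (filter_imp (fun u => G u <= G s + e * (u - s))); [|apply HD; lra].
        intros u Hu _. specialize (Hupto s ltac:(lra)). nra. }
  intros t Ht. apply Rle_plus_epsilon. intros eps Heps.
  assert (Hpos : 0 < 1 + t - a) by lra.
  specialize (Hlin (eps / (1 + t - a)) ltac:(apply Rdiv_lt_0_compat; lra) t Ht).
  replace (eps / (1 + t - a) * (1 + t - a)) with eps in Hlin by (field; lra).
  exact Hlin.
Qed.

Lemma fmax2_gronwall n a b c (q dq : nat -> nat -> R -> R) :
  a <= b ->
  (forall i j s, (i < n)%nat -> (j < n)%nat -> a <= s <= b ->
     filterlim (q i j) (within (fun u => a <= u <= b) (locally s)) (locally (q i j s))) ->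
  (forall i j s, (i < n)%nat -> (j < n)%nat -> a < s < b -> is_derive (q i j) s (dq i j s)) ->
  (forall i j s, (i < n)%nat -> (j < n)%nat -> a < s < b ->
     q i j s = fmax2 n (fun i j => q i j s) -> dq i j s <= c * q i j s) ->
  forall t, a <= t <= b ->
    fmax2 n (fun i j => q i j t) <= exp (c * (t - a)) * fmax2 n (fun i j => q i j a).
Proof.
  intros Hab Hc Hd Hdq t Ht.
  (* e^{-cu} q_ij has nonpositive derivative wherever q_ij attains the maximum, so the
     weighted maximum is nonincreasing. *)
  assert (Hscale : forall u, fmax2 n (fun i j => exp (- c * u) * q i j u)
                             = exp (- c * u) * fmax2 n (fun i j => q i j u)).
  { intros u. unfold fmax2. rewrite <- fmax_scal by (left; apply exp_pos).
    apply fmax_ext. intros i _. rewrite <- fmax_scal by (left; apply exp_pos). reflexivity. }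
  assert (Hgc : forall i j s, (i < n)%nat -> (j < n)%nat -> a <= s <= b ->
    filterlim (fun u => exp (- c * u) * q i j u) (within (fun u => a <= u <= b) (locally s))
      (locally (exp (- c * s) * q i j s))).
  { intros i j s Hi Hj Hs. apply filterlim_fun_mult; [|now apply Hc].
    apply (filterlim_filter_le_1 _ (filter_le_within _)).
    apply (ex_derive_continuous (fun u => exp (- c * u))). auto_derive. exact I. }
  assert (Hmono : fmax2 n (fun i j => exp (- c * t) * q i j t)
                  <= fmax2 n (fun i j => exp (- c * a) * q i j a)).
  { apply (right_dini_nonpos_nonincreasing a b
      (fun u => fmax2 n (fun i j => exp (- c * u) * q i j u)));
      [exact Hab | | | exact Ht].
    - intros s Hs. apply filterlim_fmax. intros i Hi. apply filterlim_fmax. intros j Hj.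
      now apply Hgc.
    - intros s Hs. apply right_dini_nonpos_fmax2.
      + intros i j Hi Hj.
        apply (filterlim_filter_le_1 _ (filter_le_at_right_within a b s ltac:(lra))).
        apply Hgc; [exact Hi | exact Hj | lra].
      + intros i j Hi Hj Hmax. rewrite Hscale in Hmax.
        apply Rmult_eq_reg_l in Hmax; [|apply Rgt_not_eq, exp_pos].
        apply (right_dini_nonpos_of_is_derive _ _ _
                 (is_derive_exp_weight c _ s _ (Hd i j s Hi Hj Hs))).
        pose proof (Hdq i j s Hi Hj Hs Hmax). pose proof (exp_pos (- c * s)). nra. }
  rewrite !Hscale in Hmono.
  apply Rmult_le_compat_l with (r := exp (c * t)) in Hmono; [|left; apply exp_pos].
  rewrite <- !Rmult_assoc, <- !exp_plus in Hmono.
  replace (c * t + - c * t) with 0 in Hmono by ring. rewrite exp_0, Rmult_1_l in Hmono.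
  replace (c * (t - a)) with (c * t + - c * a) by ring. exact Hmono.
Qed.

(** * The Cucker-Smale field at a maximizing pair *)

Definition diam2 (N d : nat) (w : nat -> nat -> R) : R :=
  fmax2 N (fun i j => sqdist d (w i) (w j)).

Definition cs_field (N : nat) (al : R) (p w : nat -> nat -> R) (m k : nat) : R :=
  / (INR N - 1) * fsum N (fun l => if Nat.eqb l m then 0 else al * p m l * (w l k - w m k)).

Lemma dV_eq_sqrt_diam2 N d v t : dV N d v t = sqrt (diam2 N d (fun l => v l t)).
Proof.
  unfold dV, diam2, fmax2. rewrite <- fmax_sqrt. apply fmax_ext. intros i _.
  rewrite <- fmax_sqrt. reflexivity.
Qed.

Lemma dot_cs_field N d al p w a m :
  dot d a (cs_field N al p w m) =
  / (INR N - 1) *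
    fsum N (fun l => if Nat.eqb l m then 0 else al * p m l * dot d a (vsub (w l) (w m))).
Proof.
  unfold dot, cs_field.
  rewrite (fsum_ext d _ (fun k => / (INR N - 1) *
    fsum N (fun l => a k * (if Nat.eqb l m then 0 else al * p m l * (w l k - w m k))))).
  2: { intros k _. rewrite fsum_scal. ring. }
  rewrite fsum_scal, fsum_swap. f_equal. apply fsum_ext. intros l _.
  destruct (Nat.eqb l m).
  - rewrite (fsum_ext d _ (fun _ => 0)) by (intros; ring). rewrite fsum_const. ring.
  - unfold vsub. rewrite <- fsum_scal. apply fsum_ext. intros. ring.
Qed.

Lemma mul_neg_part_le al p y K Q :
  0 <= p <= K -> - Q <= y <= 0 -> al * p * y <= Rmax 0 (- al) * K * Q.
Proof.
  intros Hp Hy. destruct (Rle_or_lt 0 al) as [Hal|Hal].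
  - rewrite Rmax_left by lra. assert (0 <= al * p) by nra. nra.
  - rewrite Rmax_right by lra. assert (p * - y <= K * Q) by nra. nra.
Qed.

Lemma dot_cs_field_at_max_le N d al K p w i j :
  (2 <= N)%nat -> (forall m l, (m < N)%nat -> (l < N)%nat -> 0 <= p m l <= K) ->
  (i < N)%nat -> (j < N)%nat -> sqdist d (w i) (w j) = diam2 N d w ->
  dot d (vsub (w i) (w j)) (cs_field N al p w i) <= Rmax 0 (- al) * K * diam2 N d w.
Proof.
  intros HN Hp Hi Hj Hmax. rewrite dot_cs_field.
  set (B := Rmax 0 (- al) * K * diam2 N d w).
  assert (HN1 : 1 <= INR N - 1) by (apply le_INR in HN; simpl in HN; lra).
  assert (Hsum : fsum N (fun l => if Nat.eqb l i then 0
                   else al * p i l * dot d (vsub (w i) (w j)) (vsub (w l) (w i)))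
                 <= (INR N - 1) * B).
  { apply fsum_skip_le; [exact Hi|]. intros l Hl _. apply mul_neg_part_le; [now apply Hp|].
    (* polarization puts the inner product in [-Q, 0] at a maximizing pair *)
    pose proof (polarization d (w i) (w j) (w l)).
    pose proof (sqdist_nonneg d (w l) (w j)). pose proof (sqdist_nonneg d (w l) (w i)).
    pose proof (fmax2_ub N (fun i j => sqdist d (w i) (w j)) l j Hl Hj).
    pose proof (fmax2_ub N (fun i j => sqdist d (w i) (w j)) l i Hl Hi).
    unfold diam2 in *. lra. }
  apply Rmult_le_reg_l with (INR N - 1); [lra|].
  rewrite <- Rmult_assoc, Rinv_r by lra. lra.
Qed.

Lemma cs_sqdist_deriv_at_max_le N d al K p w i j :
  (2 <= N)%nat -> (forall m l, (m < N)%nat -> (l < N)%nat -> 0 <= p m l <= K) ->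
  (i < N)%nat -> (j < N)%nat -> sqdist d (w i) (w j) = diam2 N d w ->
  fsum d (fun k => 2 * (w i k - w j k) * (cs_field N al p w i k - cs_field N al p w j k))
  <= 4 * K * Rmax 0 (- al) * diam2 N d w.
Proof.
  intros HN Hp Hi Hj Hmax.
  replace (fsum d _) with (2 * (dot d (vsub (w i) (w j)) (cs_field N al p w i)
                              + dot d (vsub (w j) (w i)) (cs_field N al p w j))).
  2: { unfold dot, vsub. rewrite <- fsum_plus, <- fsum_scal. apply fsum_ext. intros. ring. }
  (* the j-term is the i-term of the swapped pair, which is maximizing as well *)
  pose proof (dot_cs_field_at_max_le N d al K p w i j HN Hp Hi Hj Hmax).
  pose proof (dot_cs_field_at_max_le N d al K p w j i HN Hp Hj Hi
                ltac:(rewrite sqdist_sym; exact Hmax)).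
  lra.
Qed.

Lemma cs_diam2_growth N d al K a b (p : R -> nat -> nat -> R) (v : nat -> R -> nat -> R) :
  (2 <= N)%nat -> a <= b ->
  (forall s m l, (m < N)%nat -> (l < N)%nat -> 0 <= p s m l <= K) ->
  (forall i k s, (i < N)%nat -> (k < d)%nat -> a <= s <= b ->
     filterlim (fun r => v i r k) (within (fun r => a <= r <= b) (locally s))
       (locally (v i s k))) ->
  (forall i k s, (i < N)%nat -> (k < d)%nat -> a < s < b ->
     is_derive (fun r => v i r k) s (cs_field N al (p s) (fun l k => v l s k) i k)) ->
  forall t, a <= t <= b ->
    diam2 N d (fun l => v l t)
    <= exp (4 * K * Rmax 0 (- al) * (t - a)) * diam2 N d (fun l => v l a).
Proof.
  intros HN Hab Hp Hc Hd.
  set (F s := cs_field N al (p s) (fun l k => v l s k)).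
  apply (fmax2_gronwall N a b _ (fun i j t => sqdist d (v i t) (v j t))
    (fun i j s => fsum d (fun k => 2 * (v i s k - v j s k) * (F s i k - F s j k))));
    [exact Hab | | |].
  - intros i j s Hi Hj Hs. apply filterlim_sqdist; intros k Hk; now apply Hc.
  - intros i j s Hi Hj Hs. apply is_derive_sqdist; intros k Hk; now apply Hd.
  - intros i j s Hi Hj Hs Hmax. rewrite Hmax.
    apply (cs_sqdist_deriv_at_max_le N d al K (p s) (fun l k => v l s k)); auto.
Qed.

Lemma cs_diam2_phase_growth N d K (psi alpha : R -> R) (tn : nat -> R)
  (x v : nat -> R -> nat -> R) :
  (2 <= N)%nat -> (forall r, 0 < psi r <= K) ->
  (forall n, 0 <= tn n) -> (forall n, tn n < tn (S n)) ->
  (forall i k s, (i < N)%nat -> (k < d)%nat -> 0 <= s ->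
     filterlim (fun r => v i r k) (within (fun r => 0 <= r) (locally s)) (locally (v i s k))) ->
  (forall n i k s, (i < N)%nat -> (k < d)%nat -> tn n < s < tn (S n) ->
     is_derive (fun r => v i r k) s
       (cs_field N (alpha s) (fun m l => psi (enorm d (vsub (x m s) (x l s))))
          (fun l k => v l s k) i k)) ->
  forall n al, (forall r, tn n < r < tn (S n) -> alpha r = al) ->
  forall t, tn n <= t <= tn (S n) ->
    diam2 N d (fun l => v l t)
    <= exp (4 * K * Rmax 0 (- al) * (t - tn n)) * diam2 N d (fun l => v l (tn n)).
Proof.
  intros HN Hpsi Htpos Hinc Hvc Hvd n al Hal.
  apply (cs_diam2_growth N d al K _ _ (fun r m l => psi (enorm d (vsub (x m r) (x l r)))));
    [exact HN | apply Rlt_le, Hinc | intros; split; [apply Rlt_le|]; apply Hpsi | |].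
  - intros i k r Hi Hk Hr. pose proof (Htpos n).
    apply (filterlim_filter_le_1 _ (filter_le_within_subset (locally r)
      (fun u => tn n <= u <= tn (S n)) (fun u => 0 <= u) ltac:(intros; lra))).
    apply Hvc; [exact Hi | exact Hk | lra].
  - intros i k r Hi Hk Hr. rewrite <- (Hal r Hr). exact (Hvd n i k r Hi Hk Hr).
Qed.

Lemma Rabs_le_sup_norm psi :
  (exists M, forall r, Rabs (psi r) <= M) -> forall r, Rabs (psi r) <= sup_norm psi.
Proof.
  intros [M HM] r. unfold sup_norm.
  destruct (Lub_Rbar_correct (fun y => exists r, y = Rabs (psi r))) as [Hub Hlub].
  assert (H1 : Rbar_le (Rabs (psi r)) (Lub_Rbar (fun y => exists r, y = Rabs (psi r))))
    by (apply Hub; now exists r).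
  assert (H2 : Rbar_le (Lub_Rbar (fun y => exists r, y = Rabs (psi r))) M)
    by (apply Hlub; intros y [r' ->]; apply HM).
  destruct (Lub_Rbar (fun y => exists r, y = Rabs (psi r))); simpl in *; easy.
Qed.

(** * Alternating attractive and repulsive phases *)

Definition neg_phase_length (tn : nat -> R) (p : nat) : R := tn (2*p+2)%nat - tn (2*p+1)%nat.

Section AlternatingPhases.
Variables (tn : nat -> R) (Q : R -> R) (c : R).
Hypothesis Hinc : forall n, tn n < tn (S n).
Hypothesis Hunb : forall s, exists n, s < tn n.
Hypothesis HQ : forall t, 0 <= Q t.
Hypothesis Hc : 0 <= c.
Hypothesis Hattr :
  forall m t, tn (2*m)%nat <= t <= tn (2*m+1)%nat -> Q t <= Q (tn (2*m)%nat).
Hypothesis Hrep :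
  forall m t, tn (2*m+1)%nat <= t <= tn (2*m+2)%nat ->
    Q t <= exp (c * (t - tn (2*m+1)%nat)) * Q (tn (2*m+1)%nat).

Lemma phase_order m : tn (2*m)%nat < tn (2*m+1)%nat < tn (2*m+2)%nat.
Proof.
  replace (2*m+1)%nat with (S (2*m)) by lia. replace (2*m+2)%nat with (S (S (2*m))) by lia.
  split; apply Hinc.
Qed.

Lemma Q_rep_phase_le m t :
  tn (2*m+1)%nat <= t <= tn (2*m+2)%nat ->
  Q t <= exp (c * neg_phase_length tn m) * Q (tn (2*m)%nat).
Proof.
  intros Ht. destruct (phase_order m).
  apply Rle_trans with (1 := Hrep m t Ht).
  apply Rmult_le_compat; [left; apply exp_pos | apply HQ | |].
  - apply exp_le_compat, Rmult_le_compat_l; [exact Hc | unfold neg_phase_length; lra].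
  - apply Hattr. lra.
Qed.

Lemma Q_even_times_le m :
  Q (tn (2*m)%nat) <= exp (c * fsum m (neg_phase_length tn)) * Q (tn 0%nat).
Proof.
  induction m as [|m IH]; [simpl; rewrite Rmult_0_r, exp_0; lra|].
  replace (2 * S m)%nat with (2*m+2)%nat by lia. destruct (phase_order m).
  cbn [fsum].
  replace (exp (c * (fsum m (neg_phase_length tn) + neg_phase_length tn m)) * Q (tn 0%nat))
    with (exp (c * neg_phase_length tn m) * (exp (c * fsum m (neg_phase_length tn)) * Q (tn 0%nat)))
    by (rewrite Rmult_plus_distr_l, exp_plus; ring).
  apply Rle_trans with (1 := Q_rep_phase_le m (tn (2*m+2)%nat) ltac:(split; lra)).
  apply Rmult_le_compat_l; [left; apply exp_pos | exact IH].
Qed.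

Lemma Q_period_le m t :
  tn (2*m)%nat <= t <= tn (2*m+2)%nat ->
  Q t <= exp (c * fsum (S m) (neg_phase_length tn)) * Q (tn 0%nat).
Proof.
  intros Ht. destruct (phase_order m). pose proof (Q_even_times_le m).
  cbn [fsum].
  replace (exp (c * (fsum m (neg_phase_length tn) + neg_phase_length tn m)) * Q (tn 0%nat))
    with (exp (c * neg_phase_length tn m) * (exp (c * fsum m (neg_phase_length tn)) * Q (tn 0%nat)))
    by (rewrite Rmult_plus_distr_l, exp_plus; ring).
  assert (Hgrowth : 1 <= exp (c * neg_phase_length tn m)).
  { rewrite <- exp_0.
    apply exp_le_compat, Rmult_le_pos; [exact Hc | unfold neg_phase_length; lra]. }
  destruct (Rle_or_lt t (tn (2*m+1)%nat)).
  - pose proof (Hattr m t ltac:(split; lra)). pose proof (HQ (tn (2*m)%nat)). nra.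
  - apply Rle_trans with (1 := Q_rep_phase_le m t ltac:(split; lra)).
    apply Rmult_le_compat_l; [left; apply exp_pos | assumption].
Qed.

Lemma exists_period t :
  tn 0%nat <= t -> exists m, tn (2*m)%nat <= t <= tn (2*m+2)%nat.
Proof.
  intros H0. destruct (Hunb t) as [n Hn].
  assert (Hint : exists k, tn k <= t <= tn (S k)).
  { induction n as [|n IH]; [lra|].
    destruct (Rlt_or_le t (tn n)) as [Hlt|Hle]; [exact (IH Hlt) | exists n; lra]. }
  destruct Hint as [k Hk]. destruct (Nat.Even_or_Odd k) as [[m ->] | [m ->]]; exists m.
  - destruct (phase_order m). replace (S (2*m)) with (2*m+1)%nat in Hk by lia. lra.
  - destruct (phase_order m). replace (S (2*m+1)) with (2*m+2)%nat in Hk by lia. lra.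
Qed.

Lemma Q_le_exp_total_growth L :
  (forall m, c * fsum m (neg_phase_length tn) <= L) ->
  forall t, tn 0%nat <= t -> Q t <= exp L * Q (tn 0%nat).
Proof.
  intros HL t Ht. destruct (exists_period t Ht) as [m Hm].
  apply Rle_trans with (1 := Q_period_le m t Hm).
  apply Rmult_le_compat_r; [apply HQ | apply exp_le_compat, HL].
Qed.

End AlternatingPhases.

Lemma neg_phase_sum_le_Series K tn m :
  0 < K -> (forall n, tn n < tn (S n)) -> (forall p, neg_phase_length tn p < ln 2 / K) ->
  ex_series (log_term K tn) ->
  2 * K * fsum m (neg_phase_length tn) <= Series (log_term K tn).
Proof.
  intros HK Hinc Hshort Hser.
  assert (Hterm : forall p, 2 * K * neg_phase_length tn p <= log_term K tn p).
  { intros p. unfold log_term. rewrite Rmult_assoc. apply double_le_ln_exp_div.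
    pose proof (Hshort p) as Hp. apply Rmult_lt_compat_l with (r := K) in Hp; [|exact HK].
    replace (K * (ln 2 / K)) with (ln 2) in Hp by (field; lra). exact Hp. }
  rewrite <- fsum_scal. apply Rle_trans with (fsum m (log_term K tn)).
  - apply fsum_le. intros; apply Hterm.
  - apply fsum_le_Series; [|exact Hser]. intros p. specialize (Hterm p).
    destruct (phase_order tn Hinc p). unfold neg_phase_length in Hterm. nra.
Qed.

Theorem proposition7p11
  (N d : nat) (psi : R -> R) (tn : nat -> R) (alpha : R -> R)
  (x v : nat -> R -> nat -> R) :
  (2 <= N)%nat ->
  (* psi positive, bounded, continuous; K = ||psi||_oo *)
  (forall r, 0 < psi r) ->
  (exists M, forall r, Rabs (psi r) <= M) ->
  (forall r, continuous psi r) ->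
  is_lim (fun X => RInt (min_on psi) 0 X) p_infty p_infty ->
  (* the switching times *)
  tn 0%nat = 0 ->
  (forall n, 0 <= tn n) ->
  (forall n, tn n < tn (S n)) ->
  is_lim_seq tn p_infty ->
  (forall n, tn (2*n+2)%nat - tn (2*n+1)%nat < ln 2 / sup_norm psi) ->
  (forall n, tn (2*n+1)%nat - tn (2*n)%nat > 1 / sup_norm psi) ->
  (* the sign function alpha *)
  alpha 0 = 1 ->
  (forall n s, tn (2*n)%nat < s < tn (2*n+1)%nat -> alpha s = 1) ->
  (forall n s, tn (2*n+1)%nat <= s <= tn (2*n+2)%nat -> alpha s = -1) ->
  (* (x_i, v_i) continuous on [0, oo) *)
  (forall i k s, (i < N)%nat -> (k < d)%nat -> 0 <= s ->
     filterlim (fun r => x i r k) (within (fun r => 0 <= r) (locally s))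
       (locally (x i s k))) ->
  (forall i k s, (i < N)%nat -> (k < d)%nat -> 0 <= s ->
     filterlim (fun r => v i r k) (within (fun r => 0 <= r) (locally s))
       (locally (v i s k))) ->
  (* the Cucker-Smale system on each open interval (t_n, t_{n+1}) *)
  (forall n i k s, (i < N)%nat -> (k < d)%nat -> tn n < s < tn (S n) ->
     is_derive (fun r => x i r k) s (v i s k)) ->
  (forall n i k s, (i < N)%nat -> (k < d)%nat -> tn n < s < tn (S n) ->
     is_derive (fun r => v i r k) s
       (/ (INR N - 1) *
        fsum N (fun j => if Nat.eqb j i then 0 else
          alpha s * psi (enorm d (vsub (x i s) (x j s)))
            * (v j s k - v i s k)))) ->
  (* summability assumption *)
  ex_series (log_term (sup_norm psi) tn) ->
  forall s, 0 <= s ->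
    dV N d v s <= exp (Series (log_term (sup_norm psi) tn)) * dV N d v 0.
Proof.
  intros HN Hpos Hbnd _ _ Ht0 Htpos Hinc Hlim Hneg _ _ Ha1 Ha2 _ Hvc _ Hvd Hser s Hs.
  set (K := sup_norm psi).
  assert (Hpsi : forall r, 0 < psi r <= K).
  { intros r. split; [apply Hpos|].
    apply Rle_trans with (2 := Rabs_le_sup_norm psi Hbnd r), Rle_abs. }
  assert (HK : 0 < K) by (destruct (Hpsi 0); lra).
  set (Q := fun t => diam2 N d (fun l => v l t)).
  pose proof (cs_diam2_phase_growth N d K psi alpha tn x v HN Hpsi Htpos Hinc Hvc Hvd)
    as Hphase.
  assert (Hbound : Q s <= exp (2 * Series (log_term K tn)) * Q (tn 0%nat)).
  { apply (Q_le_exp_total_growth tn Q (4 * K));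
      [exact Hinc | | intros; apply fmax_ge0 | lra | | | | lra].
    - intros r. destruct (proj2 (is_lim_seq_spec tn p_infty) Hlim r) as [n Hn].
      exists n. now apply Hn.
    - intros m t Ht. rewrite Nat.add_1_r in Ht.
      pose proof (Hphase (2*m)%nat 1
        (fun r Hr => Ha1 m r ltac:(rewrite Nat.add_1_r; exact Hr)) t Ht) as H.
      rewrite Rmax_left, Rmult_0_r, Rmult_0_l, exp_0, Rmult_1_l in H by lra. exact H.
    - intros m t Ht. replace (2*m+2)%nat with (S (2*m+1)) in Ht by lia.
      pose proof (Hphase (2*m+1)%nat (-1)
        (fun r Hr => Ha2 m r ltac:(replace (2*m+2)%nat with (S (2*m+1)) by lia; lra)) t Ht) as H.
      rewrite Rmax_right in H by lra. now replace (4 * K * - -1) with (4 * K) in H by ring.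
    - intros m. pose proof (neg_phase_sum_le_Series K tn m HK Hinc Hneg Hser). lra. }
  rewrite !dV_eq_sqrt_diam2, Ht0 in *. apply sqrt_le_exp_mul; [apply fmax_ge0 | exact Hbound].
Qed.
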